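(* Let $S$ be a solid and let $x,y\in S^*$. If $e(x)y\le e(y)x$, then $R(x)\le R(y)$.
   Context: A solid is a set $S$ with two binary operations $+$ and $\cdot$ (written $xy$) and a binary relation $\le$ satisfying the following axioms (all variables range over $S$). (A1) $+$ is associative and commutative. (A2) For each $x$ there is $e$ with $x+e=x$ such that $e+f=e$ for every $f$ with $x+f=x$; this $e$ is unique and is denoted $e(x)$ (the magnitude of $x$). An element $x$ with $x=e(x)$ is called a magnitude. (A3) For each $x$ there is $s$ with $x+s=e(x)$ and $e(s)=e(x)$; it is unique and denoted $-x$; write $x-y$ for $x+(-y)$. (A4) $e(x+y)=e(x)$ or $e(x+y)=e(y)$. (M1) $\cdot$ is associative and commutative. (M2) For each $x\neq e(x)$ there is $u$ with $xu=x$ such that $uv=u$ for every $v$ with $xv=x$; it is unique and denoted $u(x)$. (M3) For each $x\ne e(x)$ there is $d$ with $xd=u(x)$ and $u(d)=u(x)$; it is unique and denoted $x^{-1}$; write $y/x$ for $yx^{-1}$. (M4) If $x\neq e(x)$ and $y\ne e(y)$ then $u(xy)=u(x)$ or $u(xy)=u(y)$. (O1) $\le$ is a total order (reflexive, antisymmetric, transitive, total); $x<y$ means $x\le y$ and $x\ne y$. (O2) $x\le y\Rightarrow x+z\le y+z$. (O3) $y+e(x)=e(x)\Rightarrow (y\le e(x)$ and $-y\le e(x))$. (O4) $(e(x)<x$ and $y\le z)\Rightarrow xy\le xz$. (O5) $e(y)\le y\le z\Rightarrow e(x)y\le e(x)z$. (AM1) For all $x,y$ there is $z$ with $e(x)y=e(z)$.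 (AM2) $e(xy)=e(x)y+e(y)x$. (AM3) If $x\ne e(x)$ then $e(u(x))=e(x)/x$. (AM4) (distributivity axiom) $xy+xz=x(y+z)+e(x)y+e(x)z$. (AM5) $-(xy)=(-x)y$. (E1) There is $m$ with $m+x=x$ for all $x$; it is unique, called zero and denoted $0$. (E2) There is $u$ with $ux=x$ for all $x$; it is unique, called one and denoted $1$. (E3) There is $M$ with $e(x)+M=M$ for all $x$. (E4) There is $x$ with $e(x)\ne 0$ and $e(x)\ne M$. (E5) For every $x$ there is $a$ with $x=a+e(x)$ and $e(a)=0$. (E6) If $x,y$ are magnitudes with $x<y$, there is $z$ with $z\ne e(z)$ and $x<z<y$. Further notation: $S^*=\{x\in S: x\ne e(x)\}$ (zeroless elements). $x$ is positive if $e(x)\le x$ and negative if $x<e(x)$; $|x|=x$ if $x$ is positive and $|x|=-x$ if $x$ is negative. $x$ is precise if $e(x)=0$. The relative uncertainty $R(x)$ is $e(u(x))$ if $x\ne e(x)$, and $M$ (from (E3)) if $x=e(x)$. *)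

From Stdlib Require Import ClassicalEpsilon.

(* The operations e (magnitude), opp (-x), u (unit of x), inv (x^{-1})
   are fields of the structure, constrained by exactly the defining
   properties of axioms (A2), (A3), (M2), (M3).  u and inv are only
   constrained on zeroless elements x <> e x.  The constants 0, 1 and M
   of (E1)-(E3) are also fields. *)
Record solid (S : Type) := Solid {
  add : S -> S -> S;
  mul : S -> S -> S;
  le  : S -> S -> Prop;
  e   : S -> S;
  opp : S -> S;
  u   : S -> S;
  inv : S -> S;
  zero : S;
  one  : S;
  big  : S;
  A1_assoc : forall x y z, add x (add y z) = add (add x y) z;
  A1_comm  : forall x y, add x y = add y x;
  A2 : forall x, add x (e x) = x /\ (forall f, add x f = x -> add (e x) f = e x);
  A3 : forall x, add x (opp x) = e x /\ e (opp x) = e x;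
  A4 : forall x y, e (add x y) = e x \/ e (add x y) = e y;
  M1_assoc : forall x y z, mul x (mul y z) = mul (mul x y) z;
  M1_comm  : forall x y, mul x y = mul y x;
  M2 : forall x, x <> e x ->
         mul x (u x) = x /\ (forall v, mul x v = x -> mul (u x) v = u x);
  M3 : forall x, x <> e x -> mul x (inv x) = u x /\ u (inv x) = u x;
  M4 : forall x y, x <> e x -> y <> e y -> u (mul x y) = u x \/ u (mul x y) = u y;
  O1_refl  : forall x, le x x;
  O1_antisym : forall x y, le x y -> le y x -> x = y;
  O1_trans : forall x y z, le x y -> le y z -> le x z;
  O1_total : forall x y, le x y \/ le y x;
  O2 : forall x y z, le x y -> le (add x z) (add y z);
  O3 : forall x y, add y (e x) = e x -> le y (e x) /\ le (opp y) (e x);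
  O4 : forall x y z, (le (e x) x /\ e x <> x) -> le y z -> le (mul x y) (mul x z);
  O5 : forall x y z, le (e y) y -> le y z -> le (mul (e x) y) (mul (e x) z);
  AM1 : forall x y, exists z, mul (e x) y = e z;
  AM2 : forall x y, e (mul x y) = add (mul (e x) y) (mul (e y) x);
  AM3 : forall x, x <> e x -> e (u x) = mul (e x) (inv x);
  AM4 : forall x y z, add (mul x y) (mul x z)
                      = add (add (mul x (add y z)) (mul (e x) y)) (mul (e x) z);
  AM5 : forall x y, opp (mul x y) = mul (opp x) y;
  E1 : forall x, add zero x = x;
  E2 : forall x, mul one x = x;
  E3 : forall x, add (e x) big = big;
  E4 : exists x, e x <> zero /\ e x <> big;
  E5 : forall x, exists a, x = add a (e x) /\ e a = zero;
  E6 : forall x y, x = e x -> y = e y -> (le x y /\ x <> y) ->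
         exists z, z <> e z /\ (le x z /\ x <> z) /\ (le z y /\ z <> y)
}.

Arguments add {S} _ _ _.
Arguments mul {S} _ _ _.
Arguments le {S} _ _ _.
Arguments e {S} _ _.
Arguments opp {S} _ _.
Arguments u {S} _ _.
Arguments inv {S} _ _.
Arguments zero {S} _.
Arguments one {S} _.
Arguments big {S} _.

Definition relunc {S : Type} (T : solid S) (x : S) : S :=
  if excluded_middle_informative (x <> e T x) then e T (u T x) else big T.

From Pilot Require Import Defs.
From Stdlib Require Import Classical ClassicalEpsilon.

(** Multiplying the hypothesis [e(x) y <= e(y) x], an inequality between
    magnitudes, by [x^-1 y^-1] gives [R(x) u(y) <= R(y) u(x)].  The units
    [u(x)], [u(y)] are idempotent, and every zeroless idempotent [a] equals
    [1 + e(a)] with [e(a) <= 1]; hence multiplying a magnitude by it changes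
    nothing, and the inequality reduces to [R(x) <= R(y)]. *)

Declare Scope solid_scope.

Section Solid.
Context {S : Type} (T : solid S).

Local Notation e := (Defs.e T).
Local Notation "x + y" := (add T x y) : solid_scope.
Local Notation "x * y" := (mul T x y) : solid_scope.
Local Notation "- x" := (opp T x) : solid_scope.
Local Notation "x <= y" := (le T x y) : solid_scope.
Local Notation "x < y" := (le T x y /\ x <> y) : solid_scope.
Local Open Scope solid_scope.

Lemma addC x y : x + y = y + x.
Proof. apply A1_comm. Qed.

Lemma addA x y z : x + (y + z) = x + y + z.
Proof. apply A1_assoc. Qed.

Lemma mulC x y : x * y = y * x.
Proof. apply M1_comm. Qed.

Lemma mulA x y z : x * (y * z) = x * y * z.
Proof. apply M1_assoc. Qed.

Lemma mulACA a b c d : a * b * (c * d) = a * c * (b * d).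
Proof. rewrite !mulA, <- (mulA a b c), (mulC b c), mulA. reflexivity. Qed.

Lemma le_refl x : x <= x.
Proof. apply O1_refl. Qed.

Lemma le_anti x y : x <= y -> y <= x -> x = y.
Proof. apply O1_antisym. Qed.

Lemma le_trans x y z : x <= y -> y <= z -> x <= z.
Proof. apply O1_trans. Qed.

Lemma le_total x y : x <= y \/ y <= x.
Proof. apply O1_total. Qed.

Lemma le_add_r x y z : x <= y -> x + z <= y + z.
Proof. apply O2. Qed.

Lemma add_e x : x + e x = x.
Proof. apply (A2 _ T x). Qed.

Lemma e_absorb x f : x + f = x -> e x + f = e x.
Proof. apply (A2 _ T x). Qed.

Lemma add_opp x : x + - x = e x.
Proof. apply (A3 _ T x). Qed.

Lemma e_opp x : e (- x) = e x.
Proof. apply (A3 _ T x). Qed.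

Lemma add0r x : zero T + x = x.
Proof. apply E1. Qed.

Lemma e_add_e x : e x + e x = e x.
Proof. apply e_absorb, add_e. Qed.

Lemma e_idem x : e (e x) = e x.
Proof.
  assert (Hx : x + e (e x) = x).
  { rewrite <- (add_e x) at 1. rewrite <- addA, add_e. apply add_e. }
  rewrite <- (e_absorb (e x) (e x) (e_add_e x)), addC.
  apply e_absorb, Hx.
Qed.

Lemma add_mag_idem t : e t = t -> t + t = t.
Proof. intros Ht. rewrite <- Ht. apply e_add_e. Qed.

Lemma absorb_le_mag t y : e t = t -> y + t = t -> y <= t.
Proof. intros Ht H. rewrite <- Ht in *. apply (O3 _ T t y H). Qed.

Lemma zero_le_mag t : e t = t -> zero T <= t.
Proof. intros Ht. apply absorb_le_mag; [exact Ht | apply add0r]. Qed.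

Lemma absorb_of_le_mag b t : e t = t -> zero T <= b -> b <= t -> b + t = t.
Proof.
  intros Ht H0b Hbt. apply le_anti.
  - rewrite <- (add_mag_idem t Ht) at 2. apply le_add_r, Hbt.
  - rewrite <- (add0r t) at 1. apply le_add_r, H0b.
Qed.

Lemma opp_mag t : e t = t -> - t = t.
Proof.
  intros Ht.
  assert (H : - t + t = - t) by (rewrite <- Ht at 2; rewrite <- e_opp; apply add_e).
  rewrite <- H, addC, add_opp. exact Ht.
Qed.

Lemma opp_unique w s : w + s = e w -> e s = e w -> s = - w.
Proof.
  intros H1 H2.
  rewrite <- (add_e s), H2, <- add_opp, addA, (addC s), H1, <- e_opp, addC.
  apply add_e.
Qed.

Lemma opp_opp x : - - x = x.
Proof.
  symmetry. apply opp_unique; rewrite e_opp; [rewrite addC; apply add_opp | reflexivity].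
Qed.

Lemma e_add x y : e (x + y) = e x + e y.
Proof.
  assert (Hx : e (x + y) + e x = e (x + y)).
  { apply e_absorb. rewrite <- addA, (addC y), addA, add_e. reflexivity. }
  assert (Hy : e (x + y) + e y = e (x + y)).
  { apply e_absorb. rewrite <- addA, add_e. reflexivity. }
  destruct (A4 _ T x y) as [E | E]; rewrite E in *.
  - symmetry. exact Hy.
  - rewrite addC. symmetry. exact Hx.
Qed.

Lemma opp_add x y : - (x + y) = - x + - y.
Proof.
  symmetry. apply opp_unique.
  - rewrite e_add, <- !add_opp, !addA. f_equal.
    rewrite <- !addA. f_equal. apply addC.
  - rewrite !e_add, !e_opp. reflexivity.
Qed.

Lemma opp_absorb c t : e t = t -> c + t = t -> - c + t = t.
Proof.
  intros Ht H. rewrite <- (opp_mag t Ht) at 1 2. rewrite <- opp_add, H. reflexivity.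
Qed.

Lemma opp_zeroless x : x <> e x -> - x <> e (- x).
Proof.
  intros Hx H. apply Hx. rewrite e_opp in H.
  rewrite <- (add_e x) at 1. rewrite <- H at 1. apply add_opp.
Qed.

Lemma opp_gt_e x : x <> e x -> x <= e x -> e (- x) < - x.
Proof.
  intros Hx Hle. split.
  - rewrite e_opp. pose proof (le_add_r _ _ (- x) Hle) as H.
    rewrite add_opp, addC, <- e_opp, add_e, e_opp in H. exact H.
  - intros H. apply (opp_zeroless x Hx). auto.
Qed.

Lemma mul1r x : x * one T = x.
Proof. rewrite mulC. apply E2. Qed.

Lemma mulNr x y : - x * y = - (x * y).
Proof. symmetry. apply AM5. Qed.

Lemma mulrN x y : x * - y = - (x * y).
Proof. rewrite mulC, mulNr, mulC. reflexivity. Qed.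

Lemma e_mul_magl t y : e t = t -> e (t * y) = t * y.
Proof.
  intros Ht. destruct (AM1 _ T t y) as [z Hz]. rewrite Ht in Hz. rewrite Hz. apply e_idem.
Qed.

Lemma e_mul_magr t y : e t = t -> e (y * t) = y * t.
Proof. rewrite mulC. apply e_mul_magl. Qed.

(** [O4] and [O5] only cover positive multipliers; for magnitudes the sign of
    the multiplier does not matter, because a magnitude is its own opposite. *)
Lemma mul_le_mag z A B : e A = A -> e B = B -> A <= B -> A * z <= B * z.
Proof.
  intros HA HB Hle. rewrite (mulC A), (mulC B).
  destruct (classic (z = e z)) as [Hz | Hz].
  - rewrite Hz. apply O5; [rewrite HA; apply le_refl | exact Hle].
  - destruct (le_total (e z) z) as [H | H].
    + apply O4; auto.
    + pose proof (O4 _ T _ _ _ (opp_gt_e z Hz H) Hle) as H'.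
      rewrite !mulNr, !opp_mag in H' by (apply e_mul_magr; assumption). exact H'.
Qed.

Lemma one_zeroless x : x <> e x -> one T <> e (one T).
Proof.
  intros Hx H. apply Hx. rewrite <- (E2 _ T x), H. symmetry. apply e_mul_magl, e_idem.
Qed.

Section One.
Hypothesis Hone : one T <> e (one T).

Lemma one_not_le_e : ~ one T <= e (one T).
Proof.
  intros Hle. destruct (opp_gt_e _ Hone Hle) as [Hp Hneq].
  pose proof (O4 _ T _ _ _ (conj Hp Hneq) Hle) as H.
  rewrite (mulC _ (one T)), E2, mulNr, E2, (opp_mag (e (one T))), <- e_opp in H
    by apply e_idem.
  apply Hneq, le_anti; assumption.
Qed.

Lemma e_one_lt_one : e (one T) < one T.
Proof.
  split; [|auto].
  destruct (le_total (e (one T)) (one T)) as [H | H]; [exact H|].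
  contradiction (one_not_le_e H).
Qed.

(** Writing [1 = p + N] with [N = e(1)] and [p] precise, [AM2] gives [N p = 0]
    and [AM4] gives [N <= N N]; so [N <= p] forces [N <= 0], while [p <= N]
    would give [1 <= N]. *)
Lemma e_one : e (one T) = zero T.
Proof.
  set (N := e (one T)).
  assert (HN : e N = N) by apply e_idem.
  destruct (E5 _ T (one T)) as [p [Hp Ep]]. fold N in Hp.
  assert (Np : N * p = zero T).
  { pose proof (AM2 _ T (one T) p) as H.
    rewrite E2, Ep, (mulC (zero T)), E2, addC, add0r in H. symmetry. exact H. }
  assert (NNN : N <= N * N).
  { pose proof (AM4 _ T N p N) as H.
    rewrite HN, <- Hp, Np, (mulC N (one T)), E2, add0r, (addC N), add0r in H.
    apply absorb_le_mag; [apply e_mul_magl, HN | symmetry; exact H]. }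
  destruct (le_total N p) as [H | H].
  - pose proof (O5 _ T (one T) N p) as H5. fold N in H5. rewrite HN, Np in H5.
    apply le_anti; [| apply zero_le_mag, HN].
    apply (le_trans _ _ _ NNN), H5; [apply le_refl | exact H].
  - exfalso. apply one_not_le_e. fold N.
    pose proof (le_add_r _ _ N H) as H2. rewrite <- Hp, add_mag_idem in H2; auto.
Qed.

End One.

Section Idempotent.
Variable a : S.
Hypotheses (Ha : a <> e a) (Haa : a * a = a).

Lemma idem_mul_e : a * e a = e a.
Proof.
  pose proof (AM2 _ T a a) as H. rewrite Haa, add_mag_idem in H by apply e_mul_magl, e_idem.
  rewrite mulC. symmetry. exact H.
Qed.

Lemma idem_gt_e : e a < a.
Proof.
  split; [|auto].
  destruct (le_total (e a) a) as [H | H]; [exact H | exfalso].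
  destruct (opp_gt_e a Ha H) as [Hp Hneq].
  pose proof (O4 _ T _ _ _ (conj Hp Hneq) H) as H2.
  rewrite mulNr, Haa, mulNr, idem_mul_e, (opp_mag (e a)), <- e_opp in H2
    by apply e_idem.
  apply Hneq, le_anti; assumption.
Qed.

Lemma idem_e_le1 : e a <= one T.
Proof.
  destruct (le_total (e a) (one T)) as [H | H]; [exact H | exfalso].
  pose proof (O4 _ T _ _ _ idem_gt_e H) as H2. rewrite mul1r, idem_mul_e in H2.
  apply Ha, le_anti; [exact H2 | apply idem_gt_e].
Qed.

Lemma idem_sq_absorb p :
  e p < p -> e p = e a -> p * a + e a = e a -> p * p + e a = e a.
Proof.
  intros Hp Hep Hpa.
  assert (Hpa_le : p * a <= e a) by (apply absorb_le_mag; [apply e_idem | exact Hpa]).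
  destruct (le_total a p) as [H | H].
  - exfalso. pose proof (O4 _ T _ _ _ idem_gt_e H) as H2. rewrite Haa, mulC in H2.
    apply Ha, le_anti; [apply (le_trans _ _ _ H2 Hpa_le) | apply idem_gt_e].
  - apply absorb_of_le_mag; [apply e_idem | |].
    + apply (le_trans _ (p * e p)).
      * apply zero_le_mag, e_mul_magr, e_idem.
      * apply O4; [exact Hp | apply Hp].
    + apply (le_trans _ _ _ (O4 _ T _ _ _ Hp H) Hpa_le).
Qed.

Section Deviation.
Hypothesis Hone : one T <> e (one T).

Let c := a + - one T.

Lemma e_dev : e c = e a.
Proof.
  assert (HcR : c + e a = c).
  { unfold c. rewrite <- addA, (addC _ (e a)), addA, add_e. reflexivity. }
  destruct (A4 _ T a (- one T)) as [E | E]; fold c in E; [exact E|].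
  rewrite e_opp, e_one in E by exact Hone.
  assert (H : e a <= e c).
  { apply absorb_le_mag; [apply e_idem | rewrite addC; apply e_absorb, HcR]. }
  rewrite E in *. apply le_anti; [apply zero_le_mag, e_idem | exact H].
Qed.

Lemma idem_mul_dev : a * c + e a = e a.
Proof.
  pose proof (AM4 _ T a a (- one T)) as H. fold c in H.
  rewrite Haa, !mulrN, !mul1r, add_opp, (mulC _ a), idem_mul_e, opp_mag, <- addA,
    e_add_e in H by apply e_idem.
  symmetry. exact H.
Qed.

Lemma opp_dev : - c = c * c + e a.
Proof.
  assert (Hnc : e a + - c = - c) by (rewrite addC, <- e_dev, <- e_opp; apply add_e).
  pose proof (AM4 _ T c a (- one T)) as H. fold c in H.
  rewrite e_dev, !mulrN, !mul1r, (mulC (e a) a), idem_mul_e, (opp_mag (e a)), <- addA,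
    e_add_e in H by apply e_idem.
  rewrite <- H, <- Hnc, addA, (mulC c), idem_mul_dev, Hnc. reflexivity.
Qed.

(** If [c] were zeroless, [idem_sq_absorb] applied to [c] or [- c] would make
    [c c] absorbed by [e a], and [opp_dev] would then turn [- c] into [e a]. *)
Lemma dev_mag : e c = c.
Proof.
  destruct (classic (c = e c)) as [E | Hc]; [symmetry; exact E | exfalso].
  assert (Hsq : c * c + e a = e a).
  { destruct (le_total (e c) c) as [H | H].
    - apply idem_sq_absorb; [split; auto | apply e_dev | rewrite mulC; apply idem_mul_dev].
    - rewrite <- (opp_opp c) at 1 2. rewrite mulNr, mulrN, opp_opp.
      apply idem_sq_absorb; [apply opp_gt_e; assumption | rewrite e_opp; apply e_dev |].
      rewrite mulNr, mulC. apply opp_absorb; [apply e_idem | exact idem_mul_dev]. }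
  pose proof opp_dev as Hopp. rewrite Hsq in Hopp.
  apply Hc. rewrite <- (add_opp c), Hopp, <- e_dev. symmetry. apply add_e.
Qed.

Lemma idem_eq_one_add_e : a = one T + e a.
Proof.
  transitivity (c + one T).
  - unfold c. rewrite <- addA, (addC _ (one T)), add_opp, e_one, addC, add0r by exact Hone.
    reflexivity.
  - rewrite <- e_dev, dev_mag. apply addC.
Qed.

Lemma mag_mul_idem t : e t = t -> t * a = t.
Proof.
  intros Ht. rewrite idem_eq_one_add_e. apply le_anti.
  - apply absorb_le_mag; [exact Ht|].
    assert (HtR : t * e a <= t).
    { pose proof (O5 _ T t (e a) (one T)) as H. rewrite Ht, mul1r in H.
      apply H; [rewrite e_idem; apply le_refl | exact idem_e_le1]. }
    assert (Habs : t + t * e a = t).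
    { rewrite addC. apply absorb_of_le_mag; [exact Ht | | exact HtR].
      apply zero_le_mag, e_mul_magl, Ht. }
    pose proof (AM4 _ T t (one T) (e a)) as H.
    rewrite Ht, !mul1r, Habs, <- addA, Habs in H. symmetry. exact H.
  - pose proof (O5 _ T t (one T) (one T + e a)) as H. rewrite Ht, mul1r in H.
    apply H; [apply e_one_lt_one, Hone|].
    rewrite <- (add0r (one T)) at 1. rewrite (addC (one T)).
    apply le_add_r, zero_le_mag, e_idem.
Qed.

End Deviation.
End Idempotent.

Lemma u_zeroless x : x <> e x -> u T x <> e (u T x).
Proof.
  intros Hx H. apply Hx. destruct (M2 _ T x Hx) as [E _].
  rewrite H in E. rewrite <- E. symmetry. apply e_mul_magr, e_idem.
Qed.

Lemma u_idem x : x <> e x -> u T x * u T x = u T x.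
Proof. intros Hx. destruct (M2 _ T x Hx) as [E F]. apply F, E. Qed.

Lemma relunc_zeroless x : x <> e x -> relunc T x = e (u T x).
Proof.
  intros Hx. unfold relunc.
  destruct (excluded_middle_informative (x <> e x)); [reflexivity | contradiction].
Qed.

Lemma e_u_mul_u x y : x <> e x -> y <> e y ->
  e (u T x) * u T y = e x * y * (inv T x * inv T y).
Proof.
  intros Hx Hy. rewrite mulACA, <- (AM3 _ T x Hx). f_equal. symmetry. apply (M3 _ T y Hy).
Qed.

End Solid.

Theorem mainTheorem8 (S : Type) (T : solid S) (x y : S)
  (hx : x <> e T x) (hy : y <> e T y)
  (h : le T (mul T (e T x) y) (mul T (e T y) x)) :
  le T (relunc T x) (relunc T y).
Proof.
  rewrite !relunc_zeroless by assumption.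
  pose proof (one_zeroless T x hx) as Hone.
  rewrite <- (mag_mul_idem T (u T y) (u_zeroless T y hy) (u_idem T y hy) Hone
                (e T (u T x)) (e_idem T _)).
  rewrite <- (mag_mul_idem T (u T x) (u_zeroless T x hx) (u_idem T x hx) Hone
                (e T (u T y)) (e_idem T _)).
  rewrite !e_u_mul_u, (mulC T (inv T y)) by assumption.
  apply mul_le_mag; [apply e_mul_magl, e_idem | apply e_mul_magl, e_idem | exact h].
Qed.
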